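(* Let $G$ be a graph and $n\ge 0$ an integer. Then $\operatorname{col}_{ve}(G)\ge n+4$ if and only if, in the vertex-edge marking game on $G$, Bob has a strategy guaranteeing that, at the start of one of his turns, there is an $n$-free path.
   Context: The vertex-edge marking game on a graph $G=(V,E)$ (finite or infinite) is played by Alice, who marks vertices, and Bob, who marks edges. Initially nothing is marked. The game proceeds in rounds $r=1,2,\dots$; in each round Alice first marks one unmarked vertex, then Bob marks one unmarked edge. For a finite graph the game ends when either player has no move; for an infinite graph it continues forever. After round $r$, the vertex score of $v$ is $0$ if $v$ is marked, and otherwise the number of marked edges incident to $v$. The $r$-round score is the supremum over $v\in V$ of the vertex scores after round $r$, and the final score of the game is the supremum of the $r$-round scores over all rounds. Bob has a winning strategy for score $s$ if, whatever Alice plays, Bob can force the final score to be at least $s$. The vertex-edge coloring number is $\operatorname{col}_{ve}(G)=\sup\{s : \text{Bob has a winning strategy for score } s\}+1$. In a position of the game, an $n$-free path is a path $P$ in $G$ with vertex sequence $v_0,\dots,v_k$, $k\ge 2$, such that: the first and last edges $v_0v_1$ and $v_{k-1}v_k$ are marked; the interior vertices $v_1,\dots,v_{k-1}$ are unmarked; and each interior vertex is incident to at least $n+1$ edges not in $P$, at least $n$ of which are marked. *)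

From mathcomp Require Import all_boot all_order all_algebra.
From mathcomp Require Import all_classical all_reals ereal.
From mathcomp Require Import Rstruct.
From Stdlib Require Import List.

Set Implicit Arguments.
Unset Strict Implicit.
Unset Printing Implicit Defensive.

Import Order.TTheory GRing.Theory Num.Theory.

Record sgraph := SGraph {
  gV :> Type;
  adj : gV -> gV -> Prop;
  adj_sym : forall u v, adj u v -> adj v u;
  adj_irr : forall v, ~ adj v v }.

Section Game.
Variable G : sgraph.

(* A move: Alice marks a vertex, Bob marks the edge {u,v}. *)
Inductive move := MA of G | MB of G & G.

Definition history := list move.

Definition vmarked (h : history) (v : G) : Prop := In (MA v) h.

Definition emarked (h : history) (u v : G) : Prop := In (MB u v) h \/ In (MB v u) h.

Definition alice_can (h : history) : Prop := exists v : G, ~ vmarked h v.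
Definition bob_can (h : history) : Prop :=
  exists u v : G, adj u v /\ ~ emarked h u v.

(* A play: p k is the k-th move (k = 0,1,2,...), Alice moving at even k and
   Bob at odd k; p k = None means the game has ended (the player to move had
   no legal move). *)
Definition play := nat -> option move.

Fixpoint hist (p : play) (k : nat) : history :=
  match k with
  | 0 => nil
  | k'.+1 => hist p k' ++ (if p k' is Some m then m :: nil else nil)
  end.

Definition valid_play (p : play) : Prop :=
  forall k,
    (p k = None -> p k.+1 = None) /\
    ((forall j, j < k -> p j <> None) ->
     if odd k then
       match p k with
       | Some (MB u v) => adj u v /\ ~ emarked (hist p k) u v
       | Some (MA _) => False
       | None => ~ bob_can (hist p k)
       end
     else
       match p k with
       | Some (MA v) => ~ vmarked (hist p k) v
       | Some (MB _ _) => False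
       | None => ~ alice_can (hist p k)
       end).

Definition bob_strategy := history -> G * G.

Definition bob_legal (sigma : bob_strategy) : Prop :=
  forall h, bob_can h -> adj (sigma h).1 (sigma h).2 /\ ~ emarked h (sigma h).1 (sigma h).2.

Definition consistent (sigma : bob_strategy) (p : play) : Prop :=
  forall k u v, odd k -> p k = Some (MB u v) -> sigma (hist p k) = (u, v).

Definition vscore_ge (h : history) (v : G) (s : nat) : Prop :=
  s = 0 \/
  (~ vmarked h v /\
   exists f : 'I_s -> G, injective f /\ forall i, adj v (f i) /\ emarked h v (f i)).

(* the final score of the play is at least s: some r-round score is >= s *)
Definition final_score_ge (p : play) (s : nat) : Prop :=
  exists r (v : G), vscore_ge (hist p (2 * r)) v s.

Definition bob_wins (s : nat) : Prop :=
  exists sigma : bob_strategy, bob_legal sigma /\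
    forall p, valid_play p -> consistent sigma p -> final_score_ge p s.

Definition col_ve : \bar Rdefinitions.R :=
  (ereal_sup [set ((s%:R)%R : Rdefinitions.R)%:E | s in [set s : nat | bob_wins s]] + 1)%E.

Definition on_path (f : nat -> G) (k : nat) (a b : G) : Prop :=
  exists i, i < k /\ ((a = f i /\ b = f i.+1) \/ (a = f i.+1 /\ b = f i)).

Definition nfree_path (h : history) (n : nat) : Prop :=
  exists (k : nat) (f : nat -> G),
    2 <= k /\
    (forall i j, i <= k -> j <= k -> f i = f j -> i = j) /\
    (forall i, i < k -> adj (f i) (f i.+1)) /\
    emarked h (f 0) (f 1) /\ emarked h (f k.-1) (f k) /\
    (forall i, 0 < i < k ->
       ~ vmarked h (f i) /\
       (exists g : 'I_n.+1 -> G, injective g /\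
          forall j, adj (f i) (g j) /\ ~ on_path f k (f i) (g j)) /\
       (exists g : 'I_n -> G, injective g /\
          forall j, adj (f i) (g j) /\ ~ on_path f k (f i) (g j) /\ emarked h (f i) (g j))).

(* Bob can guarantee that at the start of one of his turns (k odd, Alice
   having made her move of that round) there is an n-free path. *)
Definition bob_forces_nfree (n : nat) : Prop :=
  exists sigma : bob_strategy, bob_legal sigma /\
    forall p, valid_play p -> consistent sigma p ->
      exists k, odd k /\ p k.-1 <> None /\ nfree_path (hist p k) n.

End Game.

From mathcomp Require Import all_boot all_order all_algebra.
From mathcomp Require Import all_classical all_reals ereal.
From mathcomp Require Import Rstruct.
From mathcomp Require Import zify lra.
From Stdlib Require Import List.

Set Implicit Arguments.
Unset Strict Implicit.
Unset Printing Implicit Defensive.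

Import Order.TTheory GRing.Theory Num.Theory.

(* If Bob forces score n + 3, some unmarked vertex v has n + 3 marked edges right after one
   of Bob's moves: at the start of that move v already had n + 2 of them, and any two of
   these form an n-free path of length 2 through v.
   Conversely, once an n-free path exists at Bob's turn he takes a shortest one v_0 ... v_k.
   If k = 2, the vertex v_1 has n + 2 marked edges and Bob marks one more edge at v_1 if some
   edge off the path is still unmarked (otherwise all n + 3 are already marked).  If k > 2,
   minimality forces v_1 v_2 to be unmarked; Bob marks it, and whatever Alice marks next,
   either v_0 v_1 v_2 or v_1 ... v_k is a shorter n-free path.  Finally col_ve G >= s + 1
   exactly when Bob wins for score s. *)

Section AtLeast.
Variable T : Type.

Definition at_least (s : nat) (P : T -> Prop) :=
  exists f : 'I_s -> T, injective f /\ forall i, P (f i).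

Lemma at_least_weaken s (P Q : T -> Prop) :
  (forall x, P x -> Q x) -> at_least s P -> at_least s Q.
Proof. by move=> PQ [f [fi fP]]; exists f; split=> // i; apply: PQ. Qed.

Lemma at_least_le s s' (P : T -> Prop) : s' <= s -> at_least s P -> at_least s' P.
Proof.
move=> le_s's [f [fi fP]]; exists (fun i => f (widen_ord le_s's i)); split=> // i j.
by move/fi/(congr1 val) => /= /val_inj.
Qed.

Lemma at_least_cons s (P : T -> Prop) a :
  P a -> at_least s (fun x => P x /\ x <> a) -> at_least s.+1 P.
Proof.
move=> Pa [f [fi fP]].
exists (fun i => if unlift ord0 i is Some j then f j else a); split.
  move=> i j; case: unliftP => [i' ->|->]; case: unliftP => [j' ->|->] //.
  - by move/fi ->.
  - by have [_] := fP i'.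
  - by move=> /esym; have [_] := fP j'.
by move=> i; case: unliftP => [j _|_] //; have [] := fP j.
Qed.

Lemma at_least_del s (P : T -> Prop) a :
  at_least s.+1 P -> at_least s (fun x => P x /\ x <> a).
Proof.
move=> [f [fi fP]].
have [i0 lift_neq_a] : exists i0, forall j, f (lift i0 j) <> a.
  case: (pselect (exists i, f i = a)) => [[i0 <-]|no_a].
    by exists i0 => j /fi /eqP; rewrite eq_sym (negbTE (neq_lift _ _)).
  by exists ord0 => j E; apply: no_a; exists (lift ord0 j).
by exists (fun j => f (lift i0 j)); split=> [i j /fi /lift_inj|j].
Qed.

Lemma at_least_pick s (P : T -> Prop) :
  at_least s.+1 P -> exists a, P a /\ at_least s (fun x => P x /\ x <> a).
Proof. by move=> H; have [f [_ fP]] := H; exists (f ord0); split; last exact: at_least_del. Qed.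

Lemma at_least_drop s (P : T -> Prop) c :
  at_least s.+1 (fun x => P x \/ x = c) -> at_least s P.
Proof. by move/(at_least_del c); apply: at_least_weaken => x [[]]. Qed.

End AtLeast.

Section FreePaths.
Variables (G : sgraph) (n : nat).
Implicit Types (h : history G) (f : nat -> G) (a b v w x : G).

Lemma adj_neq a b : adj a b -> a <> b.
Proof. by move=> ab E; subst; exact: adj_irr ab. Qed.

Lemma emarked_sym h a b : emarked h a b -> emarked h b a.
Proof. by case=> H; [right|left]. Qed.

Lemma emarked_incl h h' a b : incl h h' -> emarked h a b -> emarked h' a b.
Proof. by move=> hh' [H|H]; [left|right]; apply: hh'. Qed.

Lemma on_path_behead f k a b : on_path (fun i => f i.+1) k.-1 a b -> on_path f k a b.
Proof. by move=> [i [ik H]]; exists i.+1; split=> //; move: ik; case: k. Qed.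

Lemma on_path_mid f k x : 1 < k -> x = f 0 \/ x = f 2 -> on_path f k (f 1) x.
Proof. by move=> k1 [->|->]; [exists 0; split; [exact: ltnW|right] | exists 1; split; [|left]]. Qed.

Lemma on_path2_mid f x :
  f 1 <> f 0 -> f 1 <> f 2 -> on_path f 2 (f 1) x -> x = f 0 \/ x = f 2.
Proof. by move=> f10 f12 [[|[|i]] [//= _ [[E ->]|[E ->]]]]; tauto. Qed.

Definition free_interior h k f i :=
  ~ vmarked h (f i) /\
  at_least n.+1 (fun x => adj (f i) x /\ ~ on_path f k (f i) x) /\
  at_least n (fun x => adj (f i) x /\ ~ on_path f k (f i) x /\ emarked h (f i) x).

Definition free_path h k f :=
  2 <= k /\
  (forall i j, i <= k -> j <= k -> f i = f j -> i = j) /\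
  (forall i, i < k -> adj (f i) (f i.+1)) /\
  emarked h (f 0) (f 1) /\ emarked h (f k.-1) (f k) /\
  (forall i, 0 < i < k -> free_interior h k f i).

Lemma nfree_pathE h : nfree_path h n <-> exists k f, free_path h k f.
Proof. by []. Qed.

Definition cherry h a v b :=
  [/\ ~ vmarked h v, (adj v a /\ emarked h v a) /\ (adj v b /\ emarked h v b), a <> b,
      at_least n.+1 (fun x => adj v x /\ x <> a /\ x <> b) &
      at_least n (fun x => (adj v x /\ x <> a /\ x <> b) /\ emarked h v x)].

Definition path3 a v b : nat -> G := fun i => match i with 0 => a | 1 => v | _ => b end.

Lemma cherry_free_path h a v b : cherry h a v b -> free_path h 2 (path3 a v b).
Proof.
move=> [nv [[va ema] [vb emb]] ab off offm].
have [av bv] : a <> v /\ b <> v by split=> E; [apply: (adj_neq va) | apply: (adj_neq vb)].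
have off_path x : x <> a -> x <> b -> ~ on_path (path3 a v b) 2 v x.
  by move=> xa xb /(@on_path2_mid (path3 a v b) x) [] // /esym.
split=> //; split.
  by move=> [|[|[|i]]] [|[|[|j]]] //= _ _ E; exfalso; auto.
split; first by move=> [|[|i]] //= _; exact: adj_sym.
split; first exact: emarked_sym.
split=> // [[|[|i]]] //= _; split=> //; split.
  by apply: at_least_weaken off => x [vx [xa xb]]; split=> //; exact: off_path.
by apply: at_least_weaken offm => x [[vx [xa xb]] em]; do !split=> //; exact: off_path.
Qed.

Lemma free_path_cherry h h' k f :
  free_path h k f -> incl h h' -> emarked h' (f 1) (f 2) -> ~ vmarked h' (f 1) ->
  cherry h' (f 0) (f 1) (f 2).
Proof.
move=> [k2 [fi [fa [e01 [_ fin]]]]] hh' e12 nv.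
have [_ [off offm]] := fin 1 (k2 : 0 < 1 < k).
have mid x : ~ on_path f k (f 1) x -> x <> f 0 /\ x <> f 2.
  by move=> np; split=> E; apply: np; apply: on_path_mid; auto.
split=> //.
- split; last by split=> //; apply: fa.
  split; first by apply: adj_sym; apply: fa; exact: ltnW.
  by apply: emarked_incl hh' _; exact: emarked_sym.
- by move=> /(fi 0 2 isT k2).
- by apply: at_least_weaken off => x [vx /mid].
by apply: at_least_weaken offm => x [vx [/mid xf em]]; split=> //; exact: emarked_incl em.
Qed.

Lemma free_path2_cherry h f : free_path h 2 f -> cherry h (f 0) (f 1) (f 2).
Proof.
move=> fp; have [_ [_ [_ [_ [e12 fin]]]]] := fp.
exact: free_path_cherry fp (incl_refl h) e12 (fin 1 isT).1.
Qed.

Lemma free_path_behead h h' k f :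
  free_path h k f -> 2 < k -> incl h h' -> emarked h' (f 1) (f 2) ->
  (forall x, vmarked h' x -> vmarked h x \/ x = f 1) ->
  free_path h' k.-1 (fun i => f i.+1).
Proof.
move=> [k2 [fi [fa [_ [ek fin]]]]] k3 hh' e12 new_vmarked.
split; first by lia.
split.
  by move=> i j ik jk E; have [] : i.+1 = j.+1 by apply: fi E; lia.
split; first by move=> i ik; apply: fa; lia.
split=> //; split.
  have -> : k.-1.-1.+1 = k.-1 by lia.
  have -> : k.-1.+1 = k by lia.
  exact: emarked_incl ek.
move=> i /andP [i0 ik].
have [nv [off offm]] := fin i.+1 (ltac:(apply/andP; split=> //; lia) : 0 < i.+1 < k).
split.
  move=> /new_vmarked [//|E].
  have [i_eq0] : i.+1 = 1 by apply: fi E; lia.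
  by rewrite i_eq0 in i0.
split.
  by apply: at_least_weaken off => x [vx np]; split=> // /on_path_behead.
apply: at_least_weaken offm => x [vx [np em]]; do !split=> //.
  by move/on_path_behead.
exact: emarked_incl em.
Qed.

Lemma cherry_score h h' a v b :
  cherry h a v b -> incl h h' -> ~ vmarked h' v ->
  at_least n.+1 (fun x => (adj v x /\ x <> a /\ x <> b) /\ emarked h' v x) ->
  vscore_ge h' v (n + 3).
Proof.
move=> [_ [[va ema] [vb emb]] ab _ _] hh' nv side.
right; split=> //; rewrite addn3.
change (at_least n.+3 (fun x => adj v x /\ emarked h' v x)).
apply: at_least_cons (conj va (emarked_incl hh' ema)) _.
apply: at_least_cons (conj (conj vb (emarked_incl hh' emb)) (not_eq_sym ab)) _.
by apply: at_least_weaken side => x [[vx [xa xb]] em].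
Qed.

Lemma cherry_score_fresh h a v b w :
  cherry h a v b -> adj v w -> w <> a -> w <> b -> ~ emarked h v w ->
  vscore_ge (h ++ MB v w :: nil) v (n + 3).
Proof.
move=> ch vw wa wb nw; have [nv _ _ _ offm] := ch.
apply: cherry_score ch (incl_appl _ (incl_refl h)) _ _.
  by rewrite /vmarked => /(in_app_or _ _ _) [//|[//|[]]].
apply: at_least_cons (conj (conj vw (conj wa wb)) _) _.
  by left; apply: in_or_app; right; left.
apply: at_least_weaken offm => x [side em]; split.
  by split=> //; exact: emarked_incl (incl_appl _ (incl_refl h)) em.
by move=> E; apply: nw; rewrite -E.
Qed.

Lemma cherry_score_saturated h h' a v b :
  cherry h a v b -> (forall w, adj v w -> w <> a -> w <> b -> emarked h v w) ->
  incl h h' -> ~ vmarked h' v -> vscore_ge h' v (n + 3).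
Proof.
move=> ch sat hh' nv; have [_ _ _ off _] := ch.
apply: (cherry_score ch hh' nv).
apply: at_least_weaken off => x [vx [xa xb]]; split=> //.
exact: emarked_incl hh' (sat x vx xa xb).
Qed.

Lemma emarked_snoc h (o : option (move G)) v :
  exists c, forall x, emarked (h ++ (if o is Some m then m :: nil else nil)) v x ->
    emarked h v x \/ x = c.
Proof.
case: o => [[u|u u']|]; last by exists v => x; rewrite app_nil_r; left.
  by exists v => x [] /(in_app_or _ _ _) [H|[//|[]]]; left; [left|right].
exists (if pselect (u = v) then u' else u) => x.
case=> /(in_app_or _ _ _) [H|[E|[]]]; [by left; left | right | by left; right | right];
  by case: E => <- <-; case: pselect.
Qed.

Lemma score_cherry h (o : option (move G)) v :
  vscore_ge (h ++ (if o is Some m then m :: nil else nil)) v (n + 3) ->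
  exists a b, cherry h a v b.
Proof.
rewrite addn3 => -[//|[nv nbrs]].
have {}nbrs : at_least n.+3 (fun x => adj v x /\ emarked _ v x) := nbrs.
have [c new_edge] := emarked_snoc h o v.
have old : at_least n.+2 (fun x => adj v x /\ emarked h v x).
  apply: (at_least_drop (c := c)); apply: at_least_weaken nbrs.
  by move=> x [vx /new_edge [em|->]]; [left|right].
have [a [[va ema] old_a]] := at_least_pick old.
have [b [[[vb emb] ba] old_ab]] := at_least_pick old_a.
exists a, b; split=> //.
- by move=> H; apply: nv; apply: in_or_app; left.
- exact: not_eq_sym.
- by apply: at_least_weaken (at_least_del b (at_least_del a nbrs)) => x [[[vx _] xa] xb].
by apply: at_least_weaken old_ab => x [[[vx em] xa] xb].
Qed.

End FreePaths.

Section Play.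
Variables (G : sgraph) (p : play G).
Hypothesis p_valid : valid_play p.

Definition ongoing k := forall j, j < k -> p j <> None.

Lemma play_stopped j i : p j = None -> j <= i -> p i = None.
Proof.
move=> pj; elim: i => [|i IH]; first by rewrite leqn0 => /eqP <-.
by rewrite leq_eqVlt => /orP [/eqP <- //|/IH]; exact: (p_valid i).1.
Qed.

Lemma ongoing_last k : p k.-1 <> None -> ongoing k.
Proof. by move=> pk j jk pj; apply: pk; apply: play_stopped pj _; lia. Qed.

Lemma hist_move k m : p k = Some m -> hist p k.+1 = hist p k ++ m :: nil.
Proof. by move=> /= ->. Qed.

Lemma hist_incl k : incl (hist p k) (hist p k.+1).
Proof. exact: incl_appl (incl_refl _). Qed.

Lemma bob_turn (sigma : bob_strategy G) k :
  consistent sigma p -> odd k -> ongoing k -> bob_can (hist p k) ->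
  exists u v, p k = Some (MB u v) /\ sigma (hist p k) = (u, v).
Proof.
move=> p_sigma k_odd k_on can; have := (p_valid k).2 k_on; rewrite k_odd.
case E: (p k) => [[a|u v]|] => [[]|_|/(_ can) []].
by exists u, v; split=> //; exact: p_sigma E.
Qed.

Lemma bob_turn_vmarked k x :
  odd k -> ongoing k -> vmarked (hist p k.+1) x -> vmarked (hist p k) x.
Proof.
move=> k_odd k_on; have := (p_valid k).2 k_on; rewrite k_odd /vmarked /=.
case: (p k) => [[a|u v]|] => [[]|_|_]; last by rewrite app_nil_r.
by case/(in_app_or _ _ _) => [//|[//|[]]].
Qed.

Lemma alice_turn k :
  ~~ odd k -> ongoing k -> alice_can (hist p k) -> exists a, p k = Some (MA a).
Proof.
move=> k_even k_on can; have := (p_valid k).2 k_on; rewrite (negbTE k_even).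
by case: (p k) => [[a|u v]|] => [_|[]|/(_ can) []]; exists a.
Qed.

Lemma final_score_after_bob k v s :
  odd k -> vscore_ge (hist p k.+1) v s -> final_score_ge p s.
Proof.
move=> k_odd score; exists (k.+1)./2, v.
suff -> : 2 * (k.+1)./2 = k.+1 by [].
by rewrite mul2n -[RHS]odd_double_half /= k_odd.
Qed.

Lemma nfree_path_before_score n :
  final_score_ge p (n + 3) -> exists k, [/\ odd k, p k.-1 <> None & nfree_path (hist p k) n].
Proof.
move=> [r [v]]; elim: r => [|r IH] score.
  by case: score; rewrite addn3 => // -[_ [f [_ /(_ ord0) [_ [[]|[]]]]]].
rewrite mulnS add2n in score.
case E: (p (2 * r)) => [m|].
  exists (2 * r).+1; split; [by rewrite /= mul2n odd_double | by rewrite /= E |].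
  have [a [b /cherry_free_path fp]] := score_cherry score.
  by exists 2, (path3 a v b).
apply: IH; move: score => /=.
by rewrite E (p_valid (2 * r)).1 // !app_nil_r.
Qed.

End Play.

Section CherryStrategy.
Variables (G : sgraph) (n : nat) (sigma : bob_strategy G).
Implicit Types (h : history G) (f : nat -> G) (a b v w : G).

Definition shortest_free_path h k f :=
  free_path n h k f /\ forall k' f', free_path n h k' f' -> k <= k'.

Lemma shortest_free_path_exists h :
  nfree_path h n -> exists k f, shortest_free_path h k f.
Proof.
move=> [k [f fp]].
have ex_k : exists k, `[< exists f, free_path n h k f >] by exists k; apply/asboolP; exists f.
case: (ex_minnP ex_k) => k' /asboolP [f' fp'] k'_min.
by exists k', f'; split=> // k'' f'' fp''; apply: k'_min; apply/asboolP; exists f''.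
Qed.

Definition fresh_nbr h a v b w := adj v w /\ w <> a /\ w <> b /\ ~ emarked h v w.

Definition cherry_move h a v b : G * G :=
  if pselect (exists w, fresh_nbr h a v b w) is left ex then (v, proj1_sig (cid ex))
  else sigma h.

Definition shortening_strategy h : G * G :=
  if pselect (exists kf : nat * (nat -> G), shortest_free_path h kf.1 kf.2) is left ex then
    let: (k, f) := proj1_sig (cid ex) in
    if k == 2 then cherry_move h (f 0) (f 1) (f 2) else (f 1, f 2)
  else sigma h.

Lemma shortening_strategy_free_path h : nfree_path h n ->
  exists k f, shortest_free_path h k f /\
    shortening_strategy h = if k == 2 then cherry_move h (f 0) (f 1) (f 2) else (f 1, f 2).
Proof.
move=> /shortest_free_path_exists [k [f sh]]; rewrite /shortening_strategy.
case: pselect => [ex|]; last by case; exists (k, f).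
by case: cid => -[k' f'] sh'; exists k', f'.
Qed.

Lemma shortening_strategy_default h : ~ nfree_path h n -> shortening_strategy h = sigma h.
Proof. by rewrite /shortening_strategy; case: pselect => // -[[k f] [fp _]] []; exists k, f. Qed.

Lemma cherry_moveP h a v b :
  (exists w, fresh_nbr h a v b w /\ cherry_move h a v b = (v, w)) \/
  ((forall w, ~ fresh_nbr h a v b w) /\ cherry_move h a v b = sigma h).
Proof.
rewrite /cherry_move; case: pselect => [ex|no_w].
  by left; case: cid => w fw; exists w.
by right; split=> // w fw; apply: no_w; exists w.
Qed.

Lemma shortest_free_path_gt2 h k f :
  shortest_free_path h k f -> k != 2 ->
  2 < k /\ adj (f 1) (f 2) /\ ~ emarked h (f 1) (f 2).
Proof.
move=> [fp k_min] k_neq2; have [k2 [_ [fa [_ [_ fin]]]]] := fp.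
have k3 : 2 < k by rewrite ltn_neqAle eq_sym k_neq2.
split=> //; split; first exact: fa (ltnW k3).
move=> e12; have [nv _] := fin 1 (k2 : 0 < 1 < k).
have /cherry_free_path/k_min := free_path_cherry fp (incl_refl h) e12 nv.
by rewrite leqNgt k3.
Qed.

Lemma shortening_strategy_legal : bob_legal sigma -> bob_legal shortening_strategy.
Proof.
move=> sigma_legal h can.
case: (pselect (nfree_path h n)) => [ex|no_path]; last first.
  by rewrite shortening_strategy_default //; exact: sigma_legal.
have [k [f [sh ->]]] := shortening_strategy_free_path ex.
case: ifP => [_|/negbT k_neq2]; last by have [_ []] := shortest_free_path_gt2 sh k_neq2.
case: (cherry_moveP h (f 0) (f 1) (f 2)) => [[w [[vw [_ [_ nw]]] ->]]|[_ ->]] //.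
exact: sigma_legal.
Qed.

Section StrategyPlay.
Variable p : play G.
Hypotheses (p_valid : valid_play p) (p_strat : consistent shortening_strategy p).

Lemma cherry_move_wins k a v b :
  odd k -> ongoing p k -> cherry n (hist p k) a v b ->
  shortening_strategy (hist p k) = cherry_move (hist p k) a v b -> final_score_ge p (n + 3).
Proof.
move=> k_odd k_on ch Es; apply: (final_score_after_bob (v := v) k_odd).
case: (cherry_moveP (hist p k) a v b) => [[w [[vw [wa [wb nw]]] Em]]|[sat Em]].
  have can : bob_can (hist p k) by exists v, w.
  have [u [u' [pk]]] := bob_turn p_valid p_strat k_odd k_on can.
  rewrite Es Em => -[Eu Eu']; subst u u'; rewrite (hist_move pk).
  exact: cherry_score_fresh ch vw wa wb nw.
have [nv _ _ _ _] := ch.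
apply: (cherry_score_saturated ch _ (@hist_incl _ p k)).
  move=> w vw wa wb; apply: contrapT => nw; exact: sat w (conj vw (conj wa (conj wb nw))).
by move/(bob_turn_vmarked p_valid k_odd k_on).
Qed.

Lemma shortening_step k m f :
  odd k -> ongoing p k -> shortest_free_path (hist p k) m f -> m != 2 ->
  shortening_strategy (hist p k) = (f 1, f 2) ->
  [/\ odd k.+2, ongoing p k.+2 &
      exists m' f', m' < m /\ free_path n (hist p k.+2) m' f'].
Proof.
move=> k_odd k_on sh m_neq2 Es.
have [m3 [a12 n12]] := shortest_free_path_gt2 sh m_neq2.
have fp := sh.1; have [_ [_ [_ [_ [_ fin]]]]] := fp.
have [nv1 _] := fin 1 (ltac:(lia) : 0 < 1 < m).
have can : bob_can (hist p k) by exists (f 1), (f 2).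
have [u [v [pk]]] := bob_turn p_valid p_strat k_odd k_on can.
rewrite Es => -[Eu Ev]; subst u v.
have k1_on : ongoing p k.+1 by apply: (ongoing_last p_valid); rewrite /= pk.
have [a pk1] : exists a, p k.+1 = Some (MA a).
  apply: (alice_turn p_valid _ k1_on); first by rewrite /= k_odd.
  by exists (f 1); move/(bob_turn_vmarked p_valid k_odd k_on).
have k2_on : ongoing p k.+2 by apply: (ongoing_last p_valid); rewrite /= pk1.
have h2E : hist p k.+2 = (hist p k ++ MB (f 1) (f 2) :: nil) ++ MA a :: nil.
  by rewrite (hist_move pk1) (hist_move pk).
have incl2 : incl (hist p k) (hist p k.+2) by rewrite h2E; do 2!apply: incl_appl; exact: incl_refl.
have e12 : emarked (hist p k.+2) (f 1) (f 2).
  by left; rewrite h2E; apply: in_or_app; left; apply: in_or_app; right; left.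
have new_vmarked x : vmarked (hist p k.+2) x -> vmarked (hist p k) x \/ x = a.
  rewrite /vmarked h2E => /(in_app_or _ _ _) [/(in_app_or _ _ _) [H|[//|[]]]|[[->]|[]]].
  - by left.
  - by right.
split=> //; first by rewrite /= negbK.
case: (pselect (a = f 1)) => [Ea|Na].
  exists m.-1, (fun i => f i.+1); split; first by lia.
  by apply: free_path_behead fp m3 incl2 e12 _ => x /new_vmarked; rewrite Ea.
exists 2, (path3 (f 0) (f 1) (f 2)); split=> //.
apply/cherry_free_path/(free_path_cherry fp incl2 e12).
by move=> /new_vmarked [//|E]; apply: Na.
Qed.

Lemma shortening_strategy_wins m k f :
  odd k -> ongoing p k -> free_path n (hist p k) m f -> final_score_ge p (n + 3).
Proof.
elim/ltn_ind: m k f => m IH k f k_odd k_on fp.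
have [m' [f' [sh Es]]] := shortening_strategy_free_path (ex_intro _ m (ex_intro _ f fp)).
have m'_le_m : m' <= m := sh.2 _ _ fp.
case: eqP Es => [m'2 Es|/eqP m'_neq2 Es].
  apply: cherry_move_wins k_odd k_on _ Es.
  by apply: free_path2_cherry; rewrite -m'2; exact: sh.1.
have [k2_odd k2_on [m'' [f'' [lt_m'' fp'']]]] := shortening_step k_odd k_on sh m'_neq2 Es.
by apply: IH fp''; [exact: leq_trans m'_le_m | | ].
Qed.

End StrategyPlay.
End CherryStrategy.

Lemma vscore_ge_le (G : sgraph) (h : history G) v s s' :
  s' <= s -> vscore_ge h v s -> vscore_ge h v s'.
Proof.
move=> le_s's [s0|[nv nbrs]]; first by left; move: le_s's; rewrite s0 leqn0 => /eqP.
by right; split=> //; exact: (at_least_le (P := fun x => adj v x /\ emarked h v x) le_s's).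
Qed.

Lemma bob_wins_le (G : sgraph) s s' : s' <= s -> bob_wins G s -> bob_wins G s'.
Proof.
move=> le_s's [sigma [legal wins]]; exists sigma; split=> // p p_valid p_sigma.
by have [r [v score]] := wins p p_valid p_sigma; exists r, v; exact: vscore_ge_le score.
Qed.

Lemma col_ve_ge_succ (G : sgraph) (s : nat) :
  ((s.+1%:R : Rdefinitions.R)%:E <= col_ve G)%E <-> bob_wins G s.
Proof.
rewrite /col_ve; set S := (X in ereal_sup X); split=> [le_col|wins_s].
  have : ((s%:R - 1 : Rdefinitions.R)%:E < ereal_sup S)%E.
    move: le_col; case: (ereal_sup S) => [r| |] //=; last by rewrite ltry.
    by rewrite lee_fin lte_fin -natr1 => ?; lra.
  case/ereal_sup_gt => _ [t wins_t <-].
  rewrite lte_fin ltrBlDr natr1 ltr_nat ltnS => le_st.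
  exact: bob_wins_le le_st wins_t.
rewrite -natr1 EFinD; apply: leeD2r.
by apply: ereal_sup_ubound; rewrite /S; exists s.
Qed.

Lemma bob_wins_forces_nfree (G : sgraph) n : bob_wins G (n + 3) -> bob_forces_nfree G n.
Proof.
move=> [sigma [legal wins]]; exists sigma; split=> // p p_valid p_sigma.
by have [k []] := nfree_path_before_score p_valid (wins p p_valid p_sigma); exists k.
Qed.

Lemma bob_forces_nfree_wins (G : sgraph) n : bob_forces_nfree G n -> bob_wins G (n + 3).
Proof.
move=> [sigma [legal forces]]; exists (shortening_strategy n sigma).
split; first exact: shortening_strategy_legal.
move=> p p_valid p_strat.
case: (pselect (exists k, odd k /\ p k.-1 <> None /\ nfree_path (hist p k) n)).
  move=> [k [k_odd [pk /nfree_pathE [m [f fp]]]]].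
  apply: (shortening_strategy_wins p_valid p_strat k_odd _ fp).
  exact: (ongoing_last p_valid).
move=> never; exfalso; apply/never/forces => // k u v k_odd pk.
rewrite -(p_strat _ _ _ k_odd pk) shortening_strategy_default // => path_k; apply: never.
exists k; split=> //; split=> // pk1.
by move: pk; rewrite (play_stopped p_valid pk1 (leq_pred k)).
Qed.

Theorem corollary5p3 (G : sgraph) (n : nat) :
  ((((n + 4)%N%:R)%R : Rdefinitions.R)%:E <= col_ve G)%E <-> bob_forces_nfree G n.
Proof.
rewrite addnS col_ve_ge_succ.
by split; [exact: bob_wins_forces_nfree | exact: bob_forces_nfree_wins].
Qed.
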